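(* $$\lim_{k \to \infty} \sum_{n=0}^{\infty} (-1)^n \frac{1}{n!}\left\langle {n \atop k} \right\rangle = 0,$$ where the limit is over nonnegative integers $k$.
   Context: For integers $n,k\ge 0$, the Eulerian number $\left\langle {n \atop k} \right\rangle$ is the number of permutations of $\{1,\ldots,n\}$ with exactly $k$ ascents (positions $i$ with $\sigma(i)<\sigma(i+1)$), with $\left\langle {0 \atop 0} \right\rangle=1$ and $\left\langle {0 \atop k} \right\rangle=0$ for $k\ge1$; in particular $\left\langle {n \atop k} \right\rangle=0$ when $n<k$. *)

From mathcomp Require Import all_boot all_fingroup.
Set Implicit Arguments. Unset Strict Implicit. Unset Printing Implicit Defensive.

Definition ascents (n : nat) (s : 'S_n) : nat :=
  #|[set i : 'I_n | [exists j : 'I_n, (val j == i.+1) && (s i < s j)]]|.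

Definition eulerian (n k : nat) : nat :=
  #|[set s : 'S_n | ascents s == k]|.

(* Write A(n,k) = sum_(i <= k) <n i>.  The Eulerian recurrence gives the closed
   form A(n,k) = sum_(j <= k) (-1)^j C(n,j) (k+1-j)^n, and summing exponential
   series term by term yields
     sum_n (-1)^n A(n,k) / n! = H k (k+1),
   where H k x = sum_(j <= k) (x-j)^j e^(j-x) / j!.  These functions satisfy the
   delay equation H (k+1)' x = H k (x-1) - H (k+1) x, and H (k+1) = H k at k+1.
   Since (e^x (H (k+1) x - c))' = e^x (H k (x-1) - c), a lower bound c of H k
   on [k, k+1] yields the lower bound c + (v - c)/e of H (k+1) on [k+1, k+2],
   where v = H (k+1) (k+1), and symmetrically for upper bounds; hence the
   oscillation of H k on [k, k+1] is at most (1 - 1/e)^k.  For k >= 1 the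
   k-th series of the theorem is H k (k+1) - H (k-1) k = H k (k+1) - H k k,
   hence also at most (1 - 1/e)^k.
   The recurrence comes from inserting the largest letter into a permutation:
   the number of ascents is kept when inserting at the front or inside an
   ascent, and grows by one otherwise. *)

From Stdlib Require Import Reals Factorial Lia Lra.
From Coquelicot Require Import Coquelicot.

Open Scope R_scope.

Definition poisson (j : nat) (y : R) : R := y ^ j * exp (- y) / INR (fact j).

Lemma poisson_derive_S j (c x : R) :
  is_derive (fun x => poisson (S j) (x - c)) x
    (poisson j (x - c) - poisson (S j) (x - c)).
Proof.
unfold poisson; auto_derive; [exact I|].
change (fact j + j * fact j)%nat with (fact (S j)).
change (match j with 0%nat => 1 | S _ => INR j + 1 end) with (INR (S j)).
rewrite fact_simpl, mult_INR, S_INR.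
assert (Hf := INR_fact_neq_0 j); assert (Hj := pos_INR j).
simpl pow; unfold Rminus; field; lra.
Qed.

Lemma poisson_derive_0 (c x : R) :
  is_derive (fun x => poisson 0 (x - c)) x (- poisson 0 (x - c)).
Proof. unfold poisson; auto_derive; [exact I|]; simpl; unfold Rminus; field. Qed.

Lemma poisson_S_0 j : poisson (S j) 0 = 0.
Proof. unfold poisson; simpl; unfold Rdiv; ring. Qed.

Definition H (k : nat) (x : R) : R := sum_f_R0 (fun j => poisson j (x - INR j)) k.

Lemma H_S k x : H (S k) x = H k x + poisson (S k) (x - INR (S k)).
Proof. reflexivity. Qed.

Lemma H_S_diag k : H (S k) (INR k + 1) = H k (INR k + 1).
Proof. rewrite H_S, S_INR, Rminus_diag, poisson_S_0; ring. Qed.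

Lemma H_derive k (x : R) : is_derive (H (S k)) x (H k (x - 1) - H (S k) x).
Proof.
induction k as [|k IH].
- replace (H 0 (x - 1) - H 1 x)
    with (- poisson 0 (x - INR 0) + (poisson 0 (x - INR 1) - poisson 1 (x - INR 1))).
  + apply (is_derive_plus (fun x => poisson 0 (x - INR 0)));
      [apply poisson_derive_0 | apply poisson_derive_S].
  + unfold H; simpl; rewrite !Rminus_0_r; ring.
- replace (H (S k) (x - 1) - H (S (S k)) x)
    with ((H k (x - 1) - H (S k) x)
          + (poisson (S k) (x - INR (S (S k))) - poisson (S (S k)) (x - INR (S (S k))))).
  + apply (is_derive_plus (H (S k))); [exact IH | apply poisson_derive_S].
  + rewrite !H_S, (S_INR (S k)).
    replace (x - 1 - INR (S k)) with (x - (INR (S k) + 1)) by ring.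
    ring.
Qed.

Lemma derive_nonneg_le (F dF : R -> R) a b : a <= b ->
  (forall y, a <= y <= b -> is_derive F y (dF y)) ->
  (forall y, a <= y <= b -> 0 <= dF y) -> F a <= F b.
Proof.
intros ab HF Hd.
destruct (MVT_gen F a b dF) as [c [Hc Ec]];
  rewrite ?Rmin_left, ?Rmax_right in * by lra.
- intros y Hy; apply HF; lra.
- intros y Hy; apply derivable_continuous_pt.
  exists (dF y); apply is_derive_Reals, HF; lra.
- assert (0 <= dF c * (b - a)) by (apply Rmult_le_pos; [apply Hd|]; lra).
  lra.
Qed.

Lemma exp_le_mono x y : x <= y -> exp x <= exp y.
Proof. intros [lt| ->]; [left; apply exp_increasing, lt|right; reflexivity]. Qed.

Lemma exp_m1_pos_lt1 : 0 < exp (-1) < 1.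
Proof. split; [apply exp_pos|rewrite <- exp_0; apply exp_increasing; lra]. Qed.

Lemma exp_H_derive k (c s y : R) :
  is_derive (fun t => exp t * (s * (H (S k) t - c))) y (exp y * (s * (H k (y - 1) - c))).
Proof.
auto_derive.
- eexists; apply H_derive.
- replace (Derive (fun x : R => H (S k) x) y) with (H k (y - 1) - H (S k) y)
    by (symmetry; apply is_derive_unique, H_derive).
  ring.
Qed.

(* The sign [s = 1] or [s = -1] selects a lower or an upper bound [c]. *)
Lemma H_contract k (c s : R) :
  (forall y, INR k <= y <= INR k + 1 -> 0 <= s * (H k y - c)) ->
  forall x, INR k + 1 <= x <= INR k + 2 ->
    exp (-1) * (s * (H (S k) (INR k + 1) - c)) <= s * (H (S k) x - c).
Proof.
intros Hk x Hx.
assert (Hmono : exp (INR k + 1) * (s * (H (S k) (INR k + 1) - c))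
                <= exp x * (s * (H (S k) x - c))).
{ apply (derive_nonneg_le (fun t => exp t * (s * (H (S k) t - c)))
                          (fun t => exp t * (s * (H k (t - 1) - c)))); [lra| |].
  - intros y _; apply exp_H_derive.
  - intros y Hy; apply Rmult_le_pos; [left; apply exp_pos|apply Hk; lra]. }
assert (Hv : 0 <= s * (H (S k) (INR k + 1) - c)) by (rewrite H_S_diag; apply Hk; lra).
assert (Hexp : exp (-1) * exp x <= exp (INR k + 1)).
{ rewrite <- exp_plus; apply exp_le_mono; lra. }
apply (Rmult_le_reg_l (exp x)); [apply exp_pos|].
assert (0 <= (exp (INR k + 1) - exp (-1) * exp x) * (s * (H (S k) (INR k + 1) - c)))
  by (apply Rmult_le_pos; lra).
lra.
Qed.

Lemma H_oscillation k : exists m M, M - m <= (1 - exp (-1)) ^ k /\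
  forall y, INR k <= y <= INR k + 1 -> m <= H k y <= M.
Proof.
induction k as [|k [m [M [HmM Hk]]]].
- exists 0, 1; split; [simpl; lra|].
  intros y Hy; simpl in Hy.
  unfold H, poisson; simpl; rewrite Rminus_0_r, Rdiv_1_r, Rmult_1_l.
  split; [left; apply exp_pos|].
  rewrite <- exp_0; apply exp_le_mono; lra.
- set (v := H (S k) (INR k + 1)).
  exists (m + exp (-1) * (v - m)), (M - exp (-1) * (M - v)); split.
  + replace (M - exp (-1) * (M - v) - (m + exp (-1) * (v - m)))
      with ((1 - exp (-1)) * (M - m)) by ring.
    destruct exp_m1_pos_lt1; simpl; apply Rmult_le_compat_l; lra.
  + intros y Hy; rewrite S_INR in Hy.
    assert (Lo := H_contract k m 1 ltac:(intros z Hz; specialize (Hk z Hz); lra) y ltac:(lra)).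
    assert (Up := H_contract k M (-1) ltac:(intros z Hz; specialize (Hk z Hz); lra) y ltac:(lra)).
    fold v in Lo, Up; lra.
Qed.

Corollary H_increment_bound k :
  Rabs (H k (INR k + 1) - H k (INR k)) <= (1 - exp (-1)) ^ k.
Proof.
destruct (H_oscillation k) as [m [M [HmM Hk]]].
assert (B1 := Hk (INR k + 1) ltac:(lra)); assert (B0 := Hk (INR k) ltac:(lra)).
apply Rabs_le; lra.
Qed.

(* [binomR n j] vanishes for [j > n], unlike [Binomial.C n j]. *)
Definition binomR (n j : nat) : R := if (j <=? n)%nat then Binomial.C n j else 0.

Lemma binomR_n0 n : binomR n 0 = 1.
Proof.
unfold binomR, Binomial.C; simpl; rewrite Nat.sub_0_r.
field; apply INR_fact_neq_0.
Qed.

Lemma binomR_small n j : (n < j)%nat -> binomR n j = 0.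
Proof.
intros; unfold binomR.
replace (j <=? n)%nat with false by (symmetry; apply Nat.leb_gt; lia); reflexivity.
Qed.

Lemma binomR_nn n : binomR n n = 1.
Proof.
unfold binomR, Binomial.C; rewrite Nat.leb_refl, Nat.sub_diag.
simpl; field; apply INR_fact_neq_0.
Qed.

Lemma binomR_fact j m : binomR (j + m) j / INR (fact (j + m)) = / (INR (fact j) * INR (fact m)).
Proof.
unfold binomR, Binomial.C; replace (j <=? j + m)%nat with true by (symmetry; apply Nat.leb_le; lia).
replace (j + m - j)%nat with m by lia.
assert (Hj := INR_fact_neq_0 j); assert (Hm := INR_fact_neq_0 m); assert (Hjm := INR_fact_neq_0 (j + m)).
field; auto.
Qed.

Lemma binomR_S n j : binomR (S n) (S j) = binomR n j + binomR n (S j).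
Proof.
destruct (Nat.lt_trichotomy j n) as [lt|[->|gt]].
- unfold binomR; rewrite <- Binomial.pascal by exact lt.
  replace (S j <=? S n)%nat with true by (symmetry; apply Nat.leb_le; lia).
  replace (j <=? n)%nat with true by (symmetry; apply Nat.leb_le; lia).
  replace (S j <=? n)%nat with true by (symmetry; apply Nat.leb_le; lia).
  reflexivity.
- rewrite !binomR_nn, binomR_small by lia; ring.
- rewrite !binomR_small by lia; ring.
Qed.

Lemma binomR_succ_ratio n j : (INR j + 1) * binomR n (S j) = (INR n - INR j) * binomR n j.
Proof.
destruct (Nat.lt_trichotomy j n) as [lt|[->|gt]].
- unfold binomR, Binomial.C.
  replace (j <=? n)%nat with true by (symmetry; apply Nat.leb_le; lia).
  replace (S j <=? n)%nat with true by (symmetry; apply Nat.leb_le; lia).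
  replace (n - j)%nat with (S (n - S j)) by lia.
  rewrite !fact_simpl, !mult_INR, S_INR, S_INR, minus_INR, S_INR by lia.
  assert (Hj := INR_fact_neq_0 j); assert (Hnj := INR_fact_neq_0 (n - S j)).
  assert (Hlt : INR j + 1 <= INR n) by (rewrite <- S_INR; apply le_INR; lia).
  assert (0 <= INR j) by apply pos_INR.
  field; repeat split; auto; lra.
- rewrite binomR_small by lia; ring.
- rewrite !binomR_small by lia; ring.
Qed.

(* Closed form of the partial sums [sum_(i <= k) <n i>] of Eulerian numbers. *)
Definition prefix_formula (n k : nat) : R :=
  sum_f_R0 (fun j => (-1) ^ j * binomR n j * (INR k + 1 - INR j) ^ n) k.

Lemma prefix_formula_0 k : prefix_formula 0 k = 1.
Proof.
unfold prefix_formula; induction k as [|k IH].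
- simpl; rewrite binomR_n0; ring.
- rewrite tech5, binomR_small, <- IH by lia; simpl pow.
  rewrite Rmult_0_r, Rmult_0_l, Rplus_0_r; apply sum_eq; intros; ring.
Qed.

Lemma prefix_formula_n0 n : prefix_formula n 0 = 1.
Proof. unfold prefix_formula; simpl; rewrite binomR_n0, Rminus_0_r, Rplus_0_l, pow1; ring. Qed.

Lemma prefix_formula_S n k : prefix_formula (S n) (S k) =
  (INR k + 2) * prefix_formula n (S k) + (INR n - INR k - 1) * prefix_formula n k.
Proof.
unfold prefix_formula.
rewrite (decomp_sum _ (S k)), (decomp_sum (fun j => _ * binomR n j * _) (S k)) by lia.
simpl Nat.pred.
rewrite Rmult_plus_distr_l, Rplus_assoc, !scal_sum, <- plus_sum.
f_equal.
- rewrite !binomR_n0, S_INR; simpl; ring.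
- apply sum_eq; intros i _.
  rewrite binomR_S, !S_INR.
  replace (INR k + 1 + 1 - (INR i + 1)) with (INR k + 1 - INR i) by ring.
  remember (INR k + 1 - INR i) as m eqn:Hm.
  replace (INR k) with (m + INR i - 1) by lra.
  apply Rminus_diag_uniq.
  transitivity ((-1) ^ i * m ^ n *
                ((INR i + 1) * binomR n (S i) - (INR n - INR i) * binomR n i)).
  + simpl; ring.
  + rewrite binomR_succ_ratio; ring.
Qed.

(* [is_series_ext] states its hypothesis in a normed module, where [ring] and
   [field] do not apply. *)
Lemma is_series_ext_R (a b : nat -> R) (l : R) :
  (forall n, a n = b n) -> is_series a l -> is_series b l.
Proof. apply is_series_ext. Qed.

Lemma exp_series y : is_series (fun n => y ^ n / INR (fact n)) (exp y).
Proof.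
eapply is_series_ext; [|apply is_exp_Reals].
intros n; simpl; rewrite pow_n_pow; unfold scal; simpl; unfold mult; simpl; unfold Rdiv; ring.
Qed.

Lemma binomR_exp_series j y :
  is_series (fun n => binomR n j * y ^ n / INR (fact n)) (y ^ j / INR (fact j) * exp y).
Proof.
destruct j as [|j].
- apply (is_series_ext_R (fun n => y ^ n / INR (fact n))).
  { intros n; rewrite binomR_n0, Rmult_1_l; reflexivity. }
  simpl; rewrite Rdiv_1_r, Rmult_1_l; apply exp_series.
- apply (is_series_decr_n _ (S j)); [lia|].
  replace (sum_n _ _) with 0.
  2: { rewrite <- (Rmult_0_r (INR (S (Nat.pred (S j))))), <- sum_n_const.
       apply sum_n_ext_loc; intros i Hi.
       rewrite binomR_small, Rmult_0_l, Rdiv_0_l by (simpl in Hi; lia); reflexivity. }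
  replace (plus _ (opp 0)) with (y ^ S j / INR (fact (S j)) * exp y)
    by (unfold plus, opp; simpl; ring).
  apply (is_series_ext_R (fun n => y ^ S j / INR (fact (S j)) * (y ^ n / INR (fact n)))).
  + intros n; rewrite pow_add.
    transitivity (binomR (S j + n) (S j) / INR (fact (S j + n)) * (y ^ S j * y ^ n));
      [|unfold Rdiv; ring].
    rewrite binomR_fact; field; split; apply INR_fact_neq_0.
  + exact (is_series_scal_l _ _ _ (exp_series y)).
Qed.

Lemma is_series_sum_f_R0 (a : nat -> nat -> R) (l : nat -> R) K :
  (forall j, (j <= K)%nat -> is_series (a j) (l j)) ->
  is_series (fun n => sum_f_R0 (fun j => a j n) K) (sum_f_R0 l K).
Proof.
induction K as [|K IH]; intros Ha; [apply Ha; lia|].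
apply (is_series_plus _ _ _ _ (IH (fun j Hj => Ha j (le_S _ _ Hj))) (Ha (S K) (le_n _))).
Qed.

Lemma pow_opp c n : (- c) ^ n = (-1) ^ n * c ^ n.
Proof. rewrite <- Rpow_mult_distr; f_equal; ring. Qed.

Lemma prefix_formula_series k :
  is_series (fun n => (-1) ^ n / INR (fact n) * prefix_formula n k) (H k (INR k + 1)).
Proof.
set (c j := INR k + 1 - INR j).
apply (is_series_ext_R (fun n => sum_f_R0 (fun j =>
  (-1) ^ j * (binomR n j * (- c j) ^ n / INR (fact n))) k)).
- intros n; unfold prefix_formula; rewrite scal_sum; apply sum_eq; intros j _.
  rewrite pow_opp; unfold c; field; apply INR_fact_neq_0.
- replace (H k (INR k + 1))
    with (sum_f_R0 (fun j => (-1) ^ j * ((- c j) ^ j / INR (fact j) * exp (- c j))) k).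
  + apply is_series_sum_f_R0; intros j _.
    exact (is_series_scal_l _ _ _ (binomR_exp_series j _)).
  + unfold H, poisson; apply sum_eq; intros j _.
    assert (Hsq : (-1) ^ j * (-1) ^ j = 1).
    { rewrite <- Rpow_mult_distr; replace (-1 * -1) with 1 by ring; apply pow1. }
    rewrite pow_opp; unfold c, Rdiv.
    transitivity ((-1) ^ j * (-1) ^ j * ((INR k + 1 - INR j) ^ j *
                   exp (- (INR k + 1 - INR j)) * / INR (fact j))); [ring|].
    rewrite Hsq; ring.
Qed.

Section EulerianRecurrence.

Variable E : nat -> nat -> R.
Hypothesis E_0_S : forall k, E 0 (S k) = 0.
Hypothesis E_n_0 : forall n, E n 0 = 1.
Hypothesis E_S_S : forall n k,
  E (S n) (S k) = (INR k + 2) * E n (S k) + (INR n - INR k) * E n k.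

Lemma prefix_sum_S n k : sum_f_R0 (E (S n)) (S k) =
  (INR k + 2) * sum_f_R0 (E n) (S k) + (INR n - INR k - 1) * sum_f_R0 (E n) k.
Proof.
induction k as [|k IH].
- simpl; rewrite !E_n_0, E_S_S, E_n_0; simpl; ring.
- rewrite tech5, IH, E_S_S, (tech5 (E n) (S k)), (tech5 (E n) k), !S_INR; ring.
Qed.

Lemma prefix_sum_eq n k : sum_f_R0 (E n) k = prefix_formula n k.
Proof.
revert k; induction n as [|n IH]; intros k.
- rewrite prefix_formula_0; induction k as [|k IHk]; [apply E_n_0|].
  rewrite tech5, IHk, E_0_S; ring.
- destruct k as [|k]; [simpl; rewrite E_n_0, prefix_formula_n0; reflexivity|].
  rewrite prefix_sum_S, prefix_formula_S, !IH; reflexivity.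
Qed.

Lemma E_series_bound k : exists v,
  is_series (fun n => (-1) ^ n / INR (fact n) * E n k) v /\
  Rabs v <= (1 - exp (-1)) ^ k.
Proof.
destruct k as [|k].
- exists (H 0 (INR 0 + 1)); split.
  + apply (is_series_ext_R (fun n => (-1) ^ n / INR (fact n) * prefix_formula n 0)).
    * intros n; rewrite <- (prefix_sum_eq n 0); reflexivity.
    * apply prefix_formula_series.
  + unfold H, poisson; simpl.
    replace (- (0 + 1 - 0)) with (-1) by ring; rewrite Rdiv_1_r, Rmult_1_l.
    destruct exp_m1_pos_lt1; rewrite Rabs_pos_eq; lra.
- exists (H (S k) (INR (S k) + 1) - H (S k) (INR (S k))); split.
  + rewrite S_INR at 2; rewrite H_S_diag, <- S_INR.
    apply (is_series_ext_R (fun n => plus ((-1) ^ n / INR (fact n) * prefix_formula n (S k))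
                                        (opp ((-1) ^ n / INR (fact n) * prefix_formula n k)))).
    * intros n; rewrite <- !prefix_sum_eq, tech5; unfold plus, opp; simpl; ring.
    * exact (is_series_minus _ _ _ _ (prefix_formula_series (S k)) (prefix_formula_series k)).
  + apply H_increment_bound.
Qed.

Theorem alternating_eulerian_series_limit :
  (forall k, ex_series (fun n => (-1) ^ n / INR (fact n) * E n k)) /\
  is_lim_seq (fun k => Series (fun n => (-1) ^ n / INR (fact n) * E n k)) 0.
Proof.
split.
- intros k; destruct (E_series_bound k) as [v [Hv _]]; exists v; exact Hv.
- apply is_lim_seq_abs_0.
  apply (is_lim_seq_le_le (fun _ => 0) _ (fun k => (1 - exp (-1)) ^ k)).
  + intros k; destruct (E_series_bound k) as [v [Hv Hb]].
    rewrite (is_series_unique _ _ Hv); split; [apply Rabs_pos|exact Hb].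
  + apply is_lim_seq_const.
  + apply is_lim_seq_geom; destruct exp_m1_pos_lt1; rewrite Rabs_pos_eq; lra.
Qed.

End EulerianRecurrence.

Close Scope R_scope.

From mathcomp Require Import all_boot all_fingroup zify.
Set Implicit Arguments. Unset Strict Implicit. Unset Printing Implicit Defensive.

Fixpoint asc (l : seq nat) : nat :=
  if l is x :: t then (if t is y :: _ then x < y else false) + asc t else 0.

Definition asc_at (l : seq nat) (i : nat) : bool :=
  (i.+1 < size l) && (nth 0 l i < nth 0 l i.+1).

Lemma asc_count l : asc l = count (asc_at l) (iota 0 (size l)).
Proof.
elim: l => [|x t IH] //=; rewrite -[1]/(1 + 0) iotaDl count_map {}IH.
by congr (_ + _); case: t.
Qed.

Definition ins (i M : nat) (l : seq nat) : seq nat := take i l ++ M :: drop i l.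

Lemma asc_ins0 M l : all (fun x => x < M) l -> asc (ins 0 M l) = asc l.
Proof. by case: l => [|x t] //= /andP[xM _]; rewrite ltnNge ltnW. Qed.

Lemma asc_insS M l i : all (fun x => x < M) l -> i < size l ->
  asc (ins i.+1 M l) + asc_at l i = (asc l).+1.
Proof.
elim: l i => [|x t IH] [|i] //= /andP[xM tM] ilt.
- rewrite take0 drop0 /= xM /asc_at /=.
  case: t tM {IH ilt} => [|y t] //= /andP[yM _].
  by rewrite (ltnNge M y) (ltnW yM) /=; lia.
- have := IH i tM ilt.
  case: t tM ilt {IH} => [|y t] //= _ _.
  by rewrite /asc_at /=; lia.
Qed.

Lemma count_if (T : Type) (p : pred T) (b1 b2 : bool) s :
  count (fun x => if p x then b1 else b2) s = b1 * count p s + b2 * count (predC p) s.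
Proof.
elim: s => [|x s IH] /=; first by rewrite !muln0.
by rewrite {}IH; case: (p x); case: b1; case: b2 => /=; lia.
Qed.

Lemma count_asc_ins M l k : all (fun x => x < M) l ->
  count (fun i => asc (ins i M l) == k) (iota 0 (size l).+1) =
  (asc l == k) * (asc l).+1 + ((asc l).+1 == k) * (size l - asc l).
Proof.
move=> lM.
have asc_insSE i : i \in iota 0 (size l) ->
    (asc (ins i.+1 M l) == k) = if asc_at l i then asc l == k else (asc l).+1 == k.
  rewrite mem_iota => /andP[_ ilt]; have := asc_insS lM ilt.
  by case: (asc_at l i) => /= E; congr (_ == k); lia.
rewrite /= -[1]/(1 + 0) iotaDl count_map asc_ins0 //.
rewrite (eq_in_count asc_insSE) count_if -asc_count.
have -> : count (predC (asc_at l)) (iota 0 (size l)) = size l - asc l.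
  by have := count_predC (asc_at l) (iota 0 (size l)); rewrite size_iota -asc_count; lia.
by rewrite mulnS addnA.
Qed.

Lemma perm_ins i M l : perm_eq (ins i M l) (M :: l).
Proof. by rewrite /ins -cat1s perm_catCA /= perm_cons cat_take_drop. Qed.

Lemma index_ins i M l : M \notin l -> i <= size l -> index M (ins i M l) = i.
Proof.
move=> Ml il; rewrite /ins index_cat ifN; last by apply: contra Ml; apply: mem_take.
by rewrite size_takel //= eqxx addn0.
Qed.

Lemma filter_ins i M l : M \notin l -> filter (predC1 M) (ins i M l) = l.
Proof.
move=> Ml; rewrite /ins filter_cat /= eqxx -filter_cat cat_take_drop.
by apply/all_filterP/allP => x xl /=; apply: contraNneq Ml => <-.
Qed.

Lemma ins_inj M i j l l' : M \notin l -> M \notin l' -> i <= size l -> j <= size l' ->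
  ins i M l = ins j M l' -> (i, l) = (j, l').
Proof.
move=> Ml Ml' il jl' E.
have eij : i = j by rewrite -(index_ins Ml il) E index_ins.
by rewrite eij -(filter_ins i Ml) E filter_ins.
Qed.

Lemma perm_eq_permutations (T : eqType) (s : seq T) (ls : seq (seq T)) :
  uniq s -> uniq ls -> {in ls, forall l, perm_eq l s} -> size ls = (size s)`! ->
  perm_eq ls (permutations s).
Proof.
move=> Us Uls ls_s sz; apply: uniq_perm => //; first exact: permutations_uniq.
have sub : {subset ls <= permutations s} by move=> l /ls_s; rewrite mem_permutations.
have le : size (permutations s) <= size ls by rewrite size_permutations // sz.
by have [_] := uniq_min_size Uls sub le.
Qed.

Lemma permutations_iotaS n :
  perm_eq [seq ins i n l | l <- permutations (iota 0 n), i <- iota 0 n.+1]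
          (permutations (iota 0 n.+1)).
Proof.
have iotaS : perm_eq (n :: iota 0 n) (iota 0 n.+1).
  by rewrite -addn1 iotaD /= perm_sym perm_catC.
have perm_l l : l \in permutations (iota 0 n) -> (n \notin l) && (size l == n).
  by rewrite mem_permutations => Pl; rewrite (perm_mem Pl) (perm_size Pl) mem_iota ltnn size_iota andbF eqxx.
apply: perm_eq_permutations; first exact: iota_uniq.
- apply: allpairs_uniq; [exact: permutations_uniq | exact: iota_uniq |].
  move=> [l i] [l' j] Hl Hl' /= E.
  move: Hl Hl' E => /allpairsP[[a b] [al bi [-> ->]]] /allpairsP[[a' b'] [al' bi' [-> ->]]].
  move: (perm_l _ al) (perm_l _ al') bi bi' => /andP[na /eqP sa] /andP[na' /eqP sa'].
  rewrite !mem_iota /= -{1}sa -{1}sa' !ltnS => bi bi' E.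
  by case: (ins_inj na na' bi bi' E) => -> ->.
- move=> _ /allpairsP[[l i] [/= Hl _ ->]].
  apply: perm_trans (perm_ins _ _ _) _; apply: perm_trans iotaS.
  by rewrite perm_cons -mem_permutations.
- by rewrite size_allpairs size_permutations ?iota_uniq // !size_iota factS mulnC.
Qed.

Section PermSeq.
Variable n : nat.

Definition perm_seq (s : 'S_n) : seq nat := [seq val (s i) | i <- enum 'I_n].

Lemma size_perm_seq s : size (perm_seq s) = n.
Proof. by rewrite size_map size_enum_ord. Qed.

Lemma nth_perm_seq s (i : 'I_n) : nth 0 (perm_seq s) i = val (s i).
Proof. by rewrite (nth_map i) ?size_enum_ord // nth_ord_enum. Qed.

Lemma perm_seq_inj : injective perm_seq.
Proof. by move=> s t E; apply/permP => i; apply: val_inj; rewrite -!nth_perm_seq E. Qed.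

Lemma perm_seq_iota s : perm_eq (perm_seq s) (iota 0 n).
Proof.
rewrite /perm_seq (map_comp val s) -val_enum_ord; apply: perm_map.
apply: uniq_perm; [by rewrite map_inj_uniq ?enum_uniq //; apply: perm_inj | exact: enum_uniq |].
by move=> x; rewrite mem_enum; apply/mapP; exists (s^-1 x)%g; rewrite ?mem_enum ?permKV.
Qed.

Lemma ascents_perm_seq s : ascents s = asc (perm_seq s).
Proof.
rewrite /ascents cardE /enum_mem size_filter -enumT asc_count size_perm_seq.
rewrite -val_enum_ord count_map; apply: eq_count => i /=; rewrite inE /asc_at size_perm_seq.
apply/existsP/idP => [[j /andP[/eqP <- sij]]|/andP[lt hi]].
  by rewrite ltn_ord !nth_perm_seq.
by exists (Ordinal lt); rewrite eqxx -!nth_perm_seq.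
Qed.

Lemma perm_seq_permutations :
  perm_eq [seq perm_seq s | s <- enum 'S_n] (permutations (iota 0 n)).
Proof.
apply: perm_eq_permutations; first exact: iota_uniq.
- by rewrite map_inj_uniq ?enum_uniq //; apply: perm_seq_inj.
- by move=> _ /mapP[s _ ->]; apply: perm_seq_iota.
- by rewrite size_map -cardE card_Sn size_iota.
Qed.

End PermSeq.

Lemma eulerianE n k : eulerian n k = count (fun l => asc l == k) (permutations (iota 0 n)).
Proof.
rewrite /eulerian cardE /enum_mem size_filter -enumT.
rewrite -(seq.permP (perm_seq_permutations n)) (count_map (@perm_seq n)).
by apply: eq_count => s; rewrite /= inE ascents_perm_seq.
Qed.

Lemma eulerian_S n k : eulerian n.+1 k =
  k.+1 * eulerian n k + (if k is k'.+1 then (n - k') * eulerian n k' else 0).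
Proof.
rewrite !eulerianE -(seq.permP (permutations_iotaS n)) count_flatten -map_comp /comp.
set f := fun l => k.+1 * (asc l == k) + (if k is k'.+1 then (n - k') * (asc l == k') else 0).
transitivity (sumn [seq f l | l <- permutations (iota 0 n)]).
  congr sumn; apply/eq_in_map => l; rewrite mem_permutations => Pl; rewrite count_map.
  have lM : all (fun x => x < n) l by apply/allP => x; rewrite (perm_mem Pl) mem_iota.
  have sl : size l = n by rewrite (perm_size Pl) size_iota.
  have := count_asc_ins k lM; rewrite sl => ->; rewrite /f; clear f.
  case: k => [|k]; rewrite ?eqSS.
    by case: (eqVneq (asc l) 0) => [->|].
  case: (eqVneq (asc l) k.+1) => [->|_]; first by rewrite eqn_leq ltnn /=; lia.
  by case: (eqVneq (asc l) k) => [->|_] /=; lia.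
rewrite /f; case: k {f} => [|k]; rewrite ?eulerianE;
  elim: (permutations _) => [|l s /= ->]; rewrite ?muln0 //.
  by case: (asc l == 0) => /=; lia.
by case: (asc l == k.+1); case: (asc l == k) => /=; lia.
Qed.

Lemma eulerian_0 k : eulerian 0 k = (k == 0).
Proof. by rewrite eulerianE; case: k. Qed.

Lemma eulerian_n0 n : eulerian n 0 = 1.
Proof. by elim: n => [|n IH]; rewrite ?eulerian_0 // eulerian_S IH. Qed.

Lemma eulerian_small n k : n < k -> eulerian n k = 0.
Proof.
elim: n k => [|n IH] [|k] // lt; first by rewrite eulerian_0.
by rewrite eulerian_S !IH ?muln0 // ltnW.
Qed.

(* Importing mathcomp rebinds the key [%R]. *)
Delimit Scope R_scope with R.

Theorem mainTheorem6 :
  (forall k : nat,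
     ex_series (fun n : nat => ((-1) ^ n / INR (fact n) * INR (eulerian n k))%R)) /\
  is_lim_seq
    (fun k : nat => Series (fun n : nat => ((-1) ^ n / INR (fact n) * INR (eulerian n k))%R))
    0%R.
Proof.
apply: (alternating_eulerian_series_limit (fun n k => INR (eulerian n k))) => [k|n|n k].
- by rewrite eulerian_0.
- by rewrite eulerian_n0.
- rewrite eulerian_S; case: (leqP k n) => [le|lt].
  + rewrite -plusE -!multE -minusE plus_INR !mult_INR minus_INR; last exact/leP.
    rewrite !S_INR; ring.
  + rewrite (eulerian_small lt) muln0 addn0 -multE mult_INR !S_INR INR_0; ring.
Qed.
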